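(* Let $\mathcal{N}$ be the Noperthedron. For all $\theta,\varphi,\alpha\in\mathbb{R}$ the following equalities of sets hold: \[ M(\theta+2\pi/15,\varphi)\mathcal{N}=M(\theta,\varphi)\mathcal{N},\qquad R(\alpha+\pi)M(\theta,\varphi)\mathcal{N}=R(\alpha)M(\theta,\varphi)\mathcal{N}, \] \[ \begin{pmatrix}1&0\\0&-1\end{pmatrix}M(\theta,\varphi)\mathcal{N}=M(\theta+\pi/15,\pi-\varphi)\mathcal{N}. \]
   Context: $R(\alpha)=\begin{pmatrix}\cos\alpha&-\sin\alpha\\ \sin\alpha&\cos\alpha\end{pmatrix}$, $M(\theta,\varphi)=\begin{pmatrix}-\sin\theta&\cos\theta&0\\ -\cos\theta\cos\varphi&-\sin\theta\cos\varphi&\sin\varphi\end{pmatrix}$, acting elementwise on point sets. Let $R_z(\beta)=\begin{pmatrix}\cos\beta&-\sin\beta&0\\ \sin\beta&\cos\beta&0\\0&0&1\end{pmatrix}$, $\mathcal{C}_{30}=\{(-1)^\ell R_z(2\pi k/15): k=0,\dots,14,\ \ell=0,1\}$, $C_1=\frac{1}{259375205}(152024884,0,210152163)^t$, $C_2=10^{-10}(6632738028,6106948881,3980949609)^t$, $C_3=10^{-10}(8193990033,5298215096,1230614493)^t$, and $\mathcal{N}=\mathcal{C}_{30}C_1\cup\mathcal{C}_{30}C_2\cup\mathcal{C}_{30}C_3$. *)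

From HB Require Import structures.
From mathcomp Require Import all_boot all_order all_algebra.
From mathcomp Require Import classical_sets reals trigo.
From mathcomp Require Import ssrZ.
From Stdlib Require Import ZArith.
Set Implicit Arguments. Unset Strict Implicit. Unset Printing Implicit Defensive.
Import Order.TTheory GRing.Theory Num.Theory.
Local Open Scope ring_scope.
Local Open Scope classical_set_scope.

Section Noperthedron.
Variable R : realType.

Definition zR (z : Z) : R := (int_of_Z z)%:~R.

Definition mxs (m n : nat) (s : seq (seq R)) : 'M[R]_(m, n) :=
  \matrix_(i < m, j < n) nth 0 (nth [::] s i) j.

Definition Rot2 (a : R) : 'M[R]_2 :=
  mxs 2 2 [:: [:: cos a; - sin a]; [:: sin a; cos a]].

Definition Mproj (th ph : R) : 'M[R]_(2, 3) :=
  mxs 2 3 [:: [:: - sin th; cos th; 0];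
              [:: - cos th * cos ph; - sin th * cos ph; sin ph]].

Definition Rz (b : R) : 'M[R]_3 :=
  mxs 3 3 [:: [:: cos b; - sin b; 0]; [:: sin b; cos b; 0]; [:: 0; 0; 1]].

Definition Flip : 'M[R]_2 := mxs 2 2 [:: [:: 1; 0]; [:: 0; -1]].

Definition C30 : set 'M[R]_3 :=
  [set A | exists (k : 'I_15) (l : 'I_2),
     A = (-1) ^+ l *: Rz (2 * pi * (k : nat)%:R / 15)].

Definition C1 : 'cV[R]_3 :=
  (zR 259375205)^-1 *: mxs 3 1 [:: [:: zR 152024884]; [:: 0]; [:: zR 210152163]].
Definition C2 : 'cV[R]_3 :=
  (zR 10000000000)^-1 *:
    mxs 3 1 [:: [:: zR 6632738028]; [:: zR 6106948881]; [:: zR 3980949609]].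
Definition C3 : 'cV[R]_3 :=
  (zR 10000000000)^-1 *:
    mxs 3 1 [:: [:: zR 8193990033]; [:: zR 5298215096]; [:: zR 1230614493]].

Definition Noperthedron : set 'cV[R]_3 :=
  [set A *m C1 | A in C30] `|` [set A *m C2 | A in C30] `|`
  [set A *m C3 | A in C30].

End Noperthedron.

From HB Require Import structures.
From mathcomp Require Import all_boot all_order all_algebra.
From mathcomp Require Import boolp classical_sets reals trigo.
From mathcomp Require Import ring.
Set Implicit Arguments.
Unset Strict Implicit.
Unset Printing Implicit Defensive.
Import Order.TTheory GRing.Theory Num.Theory.
Local Open Scope ring_scope.
Local Open Scope classical_set_scope.

(* The set C30 is a group of matrices, so it permutes each orbit C30 v and
   hence preserves the Noperthedron.  Each of the three identities then comes
   from a factorisation through an element of C30: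
   M(th, ph) R_z(b) = M(th - b, ph), R(a + pi) = - R(a) with -1 in C30, and
   diag(1, -1) M(th, ph) = - M(th - pi, pi - ph)
                          = M(th + pi/15, pi - ph) (- R_z(16 pi / 15)). *)

Lemma image_mulmx_comp (R : pzRingType) m n p
    (A : 'M[R]_(m, n)) (B : 'M[R]_(n, p)) (S : set 'cV[R]_p) :
  mulmx A @` (mulmx B @` S) = mulmx (A *m B) @` S.
Proof. by rewrite image_comp; congr image; apply/funext => x /=; rewrite mulmxA. Qed.

Section MatrixGroupOrbit.
Variables (R : pzRingType) (n : nat) (G : set 'M[R]_n).
Hypothesis mulG : forall g h, G g -> G h -> G (g *m h).
Hypothesis invG : forall g, G g -> exists2 g', G g' & g *m g' = 1%:M.

Lemma image_mulmx_orbit (g : 'M[R]_n) (v : 'cV[R]_n) :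
  G g -> mulmx g @` [set A *m v | A in G] = [set A *m v | A in G].
Proof.
move=> Gg; apply/seteqP; split=> [_ [_ [A GA <-] <-] | _ [A GA <-]].
  by exists (g *m A); [exact: mulG | rewrite mulmxA].
have [g' Gg' gg'] := invG Gg.
exists (g' *m A *m v); first by exists (g' *m A); [exact: mulG |].
by rewrite !mulmxA gg' mul1mx.
Qed.

End MatrixGroupOrbit.

Section Noperthedron.
Variable R : realType.

Definition rot15 (k l : nat) : 'M[R]_3 := (-1) ^+ l *: Rz (2 * pi * k%:R / 15).

Lemma RzD (a b : R) : Rz a *m Rz b = Rz (a + b).
Proof.
apply/matrixP => i j; rewrite !mxE !big_ord_recr big_ord0 /= !mxE /=.
case: i => [[|[|[|i]]] Hi] //=; case: j => [[|[|[|j]]] Hj] //=;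
  rewrite ?cosD ?sinD; ring.
Qed.

Lemma Rz0 : Rz 0 = 1%:M :> 'M[R]_3.
Proof.
apply/matrixP => i j; rewrite !mxE cos0 sin0.
by case: i => [[|[|[|i]]] Hi]; case: j => [[|[|[|j]]] Hj]; rewrite //= oppr0.
Qed.

Lemma Rz_periodic : periodic (@Rz R) (pi *+ 2).
Proof. by move=> b; rewrite /Rz cosD2pi sinD2pi. Qed.

Lemma Mproj_Rz (th ph b : R) : Mproj th ph *m Rz b = Mproj (th - b) ph.
Proof.
apply/matrixP => i j; rewrite !mxE !big_ord_recr big_ord0 /= !mxE /=.
case: i => [[|[|i]] Hi] //=; case: j => [[|[|[|j]]] Hj] //=;
  rewrite ?cosB ?sinB; ring.
Qed.

Lemma Rot2Dpi (a : R) : Rot2 (a + pi) = - Rot2 a.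
Proof.
apply/matrixP => i j; rewrite !mxE cosDpi sinDpi.
by case: i => [[|[|i]] Hi]; case: j => [[|[|j]] Hj]; rewrite //= opprK.
Qed.

Lemma Flip_Mproj (th ph : R) :
  Flip R *m Mproj th ph = - Mproj (th - pi) (pi - ph).
Proof.
apply/matrixP => i j; rewrite !mxE !big_ord_recr big_ord0 /= !mxE /=.
rewrite !sinB !cosB cospi sinpi.
case: i => [[|[|i]] Hi] //=; case: j => [[|[|[|j]]] Hj] //=; ring.
Qed.

Lemma C30_rot15 (k l : nat) : C30 (rot15 k l).
Proof.
exists (Ordinal (ltn_pmod k (isT : (0 < 15)%N))).
exists (Ordinal (ltn_pmod l (isT : (0 < 2)%N))).
rewrite /rot15 /= modn2 signr_odd; congr (_ *: _).
rewrite -[RHS](periodicn Rz_periodic (k %/ 15)); congr Rz.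
by rewrite {1}(divn_eq k 15) natrD natrM -mulr_natr; field.
Qed.

Lemma rot15M (k l k' l' : nat) : rot15 k l *m rot15 k' l' = rot15 (k + k') (l + l').
Proof.
rewrite /rot15 -scalemxAl -scalemxAr scalerA RzD -exprD natrD.
by congr (_ *: Rz _); ring.
Qed.

Lemma C30_mul (g h : 'M[R]_3) : C30 g -> C30 h -> C30 (g *m h).
Proof. by move=> [k [l ->]] [k' [l' ->]]; rewrite rot15M; exact: C30_rot15. Qed.

(* rot15 k l *m rot15 (15 - k) l = rot15 15 (l + l) = R_z(2 pi). *)
Lemma C30_inv (g : 'M[R]_3) : C30 g -> exists2 g', C30 g' & g *m g' = 1%:M.
Proof.
move=> [k [l ->]]; exists (rot15 (15 - k) l); first exact: C30_rot15.
rewrite rot15M subnKC 1?ltnW // /rot15 addnn -signr_odd odd_double expr0 scale1r.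
by rewrite -Rz0 -[RHS](periodicn Rz_periodic 1 0); congr Rz; field.
Qed.

Lemma C30_Noperthedron (g : 'M[R]_3) :
  C30 g -> mulmx g @` @Noperthedron R = @Noperthedron R.
Proof.
(* Abstracting the centres keeps unification away from the large literals in C1, C2, C3. *)
move=> Gg; rewrite /Noperthedron; move: (C1 R) (C2 R) (C3 R) => v1 v2 v3.
by rewrite !image_setU !(image_mulmx_orbit C30_mul C30_inv _ Gg).
Qed.

Lemma image_Noperthedron_mulmxr m (P : 'M[R]_(m, 3)) (g : 'M[R]_3) :
  C30 g -> mulmx (P *m g) @` @Noperthedron R = mulmx P @` @Noperthedron R.
Proof. by move=> Gg; rewrite -image_mulmx_comp C30_Noperthedron. Qed.

End Noperthedron.

Theorem lemma2p3 (R : realType) (th ph a : R) :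
  [/\ mulmx (Mproj (th + 2 * pi / 15) ph) @` (@Noperthedron R)
        = mulmx (Mproj th ph) @` (@Noperthedron R),
      mulmx (Rot2 (a + pi)) @` (mulmx (Mproj th ph) @` (@Noperthedron R))
        = mulmx (Rot2 a) @` (mulmx (Mproj th ph) @` (@Noperthedron R))
    & mulmx (@Flip R) @` (mulmx (Mproj th ph) @` (@Noperthedron R))
        = mulmx (Mproj (th + pi / 15) (pi - ph)) @` (@Noperthedron R)].
Proof.
have rot15_invariant m (P : 'M[R]_(m, 3)) k l :=
  image_Noperthedron_mulmxr P (C30_rot15 R k l).
split; rewrite ?image_mulmx_comp.
- have -> : Mproj th ph = Mproj (th + 2 * pi / 15) ph *m rot15 R 1 0.
    by rewrite /rot15 scale1r Mproj_Rz mulr1 addrK.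
  by rewrite [RHS]rot15_invariant.
- have -> : Rot2 (a + pi) *m Mproj th ph = Rot2 a *m Mproj th ph *m rot15 R 0 1.
    by rewrite /rot15 mulr0 mul0r Rz0 scaleN1r mulmxN mulmx1 Rot2Dpi mulNmx.
  by rewrite [LHS]rot15_invariant.
- have -> : Flip R *m Mproj th ph = Mproj (th + pi / 15) (pi - ph) *m rot15 R 8 1.
    rewrite /rot15 scaleN1r mulmxN Mproj_Rz Flip_Mproj.
    by congr (- Mproj _ _); field.
  by rewrite [LHS]rot15_invariant.
Qed.
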